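(* Let $r(\mathcal{C},R)$ be a reachability rule and $\mathrm{H}:=\mathrm{H}(\mathbf{G}(r(\mathcal{C},R)))$. If $\mathrm{H}'$ is a fracturable subset of $\mathrm{H}$ (in $\mathsf{DG}(\mathrm H)$), then $r(\mathcal{C},R)\preceq\ \triangleright^{0} pw\ \triangleright^{1} r(\mathcal{C},R)\ominus\mathbf{G}(\mathrm{H}')\ \triangleright^{0}\mathrm{H}'$.
   Context: Fix a countably infinite set $\mathtt{S}$ of sequents (atomic labels), a set $\mathcal{U}$ of vertices, and a non-empty finite set $\mathtt{E}$ of edge types. A g-sequent is $\mathcal{G}=(\mathcal{V},\mathcal{E},\mathcal{L})$ with $\mathcal{V}\subseteq\mathcal{U}$, $\mathcal{E}=\{\mathcal{E}_a\mid a\in\mathtt{E}\}$, $\mathcal{E}_a\subseteq\mathcal{V}\times\mathcal{V}$, $\mathcal{L}:\mathcal{V}\to\mathtt{S}$; $\mathcal U(\mathcal G)=\mathcal V$; written $\Gamma\vdash\Delta$ with $\Gamma$ the set of edge atoms $w\mathcal{E}_a u$ and $\Delta$ the set of prefixed sequents $w:S$; $\mathtt{PS}=\mathcal U\times\mathtt S$; commas denote disjoint union. Let $\overline{\mathtt E}=\{\bar a\mid a\in\mathtt E\}$, $\bar{\bar z}=z$, $\overline{x_1\cdots x_n}=\bar x_n\cdots\bar x_1$, $\varepsilon$ empty string. Paths: $\mathcal{G}\models u\xrightarrow{a}w$ iff $(u,w)\in\mathcal{E}_a$; $u\xrightarrow{\bar a}w$ iff $(w,u)\in\mathcal{E}_a$;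 $u\xrightarrow{\varepsilon}w$ iff $u=w$; $u\xrightarrow{xs}w$ iff some $v$ has $u\xrightarrow{x}v$, $v\xrightarrow{s}w$; $u\xrightarrow{\mathscr L}w$ iff $u\xrightarrow{s}w$ for some $s\in\mathscr L$. An $\mathtt E$-system is a finite set $\mathbf G$ of production rules $x\longrightarrow t$ ($x\in\mathtt E\cup\overline{\mathtt E}$) with $x\longrightarrow t\in\mathbf G$ iff $\bar x\longrightarrow\bar t\in\mathbf G$; $\mathbf G(s)=\{t\mid s\longrightarrow^*_{\mathbf G}t\}$. For $p=x\longrightarrow t$, $\bar p=\bar x\longrightarrow\bar t$; $(p,\bar p)$ is a production pair; $P(\mathbf G)$ is the set of such pairs. A sequent constraint $R\subseteq\mathtt S^n\times2^{\mathtt{PS}}$ is satisfied by $S_1,\dots,S_n,\Delta$ iff $(S_{\pi(1)},\dots,S_{\pi(n)},\Delta)\in R$ for some permutation $\pi$. A reachability rule $r(\mathcal C,R)$ has premises $\Gamma\vdash\Delta,w:S_i,u:S'_i$ ($i\in[n]$) and conclusion $\Gamma\vdash\Delta,w:S,u:S'$, where $\mathcal C=(C_1,\dots,C_n)$, $C_i=(\{w,u\},\{(w,u)\},L_i)$ with $L_i(w,u)=\mathbf G_i(a_i)$ ($a_i\in\mathtt E$, $\mathbf G_i$ an $\mathtt E$-system), the $i$-th premise satisfies $\mathcal G\models w\xrightarrow{\mathbf G_i(a_i)}u$, and $S_1,S'_1,\dots,S_n,S'_n,S,S',\Delta$ satisfy $R$. $\mathbf G(r(\mathcal C,R))=\bigcup_i\mathbf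 G_i$. Fracture: $r(\mathcal C,R)\ominus\mathbf G$ replaces each label $\mathbf G_i(a_i)$ by $(\mathbf G_i\setminus\mathbf G)(a_i)$. Horn rules: for $s=x_1\cdots x_n$, $w\mathcal E_s u$ abbreviates atoms $w\mathcal E_{x_1}v_1,\dots,v_{n-1}\mathcal E_{x_n}u$ ($v\mathcal E_{\bar a}z$ means $z\mathcal E_a v$; $w\mathcal E_\varepsilon u$ means $w=u$). Forward Horn rule $h_f$: premise $\Gamma,w\mathcal{E}_s u,w\mathcal{E}_a u\vdash\Delta$, conclusion $\Gamma,w\mathcal{E}_s u\vdash\Delta$; backward $h_b$: same with $u\mathcal E_a w$ in place of $w\mathcal E_a u$. $\mathbf{G}(h_f)=\{a\longrightarrow s,\bar a\longrightarrow\bar s\}$, $\mathbf{G}(h_b)=\{\bar a\longrightarrow s,a\longrightarrow\bar s\}$, $\mathbf G(\mathrm H)=\bigcup_{h\in\mathrm H}\mathbf G(h)$. For a pair $(p,\bar p)$ with $p=a\longrightarrow s$ (resp. $\bar a\longrightarrow s$), $\mathrm H(p,\bar p)$ is the corresponding forward (resp. backward) Horn rule; $\mathrm H(\mathbf G)=\bigcup_{(p,\bar p)\in P(\mathbf G)}\mathrm H(p,\bar p)$. Dependency graph: for distinct pairs with $p=x\longrightarrow s$, $p'=y\longrightarrow t$, $(p,\bar p)\sqsubset(p',\bar p')$ iff $s$ or $\bar s$ contains $y$; $\sqsubseteq$ its reflexive-transitive closure; $\mathsf{DG}(\mathrm H)=(\mathrm H,\sqsubseteq')$ with $h\sqsubseteq'h'$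 iff the pair of $h$ is $\sqsubseteq$ that of $h'$. $V'\subseteq V$ is fracturable in $(V,\sqsubseteq)$ iff no $v\in V'$, $v'\in V\setminus V'$ have $v\sqsubseteq v'$. The path weakening rule $pw$ has premise $\Gamma\vdash\Delta$ and conclusion $\Gamma,\Sigma\vdash\Delta$ with $\Sigma=w\mathcal E_a u$ for some $a\in\mathtt E$ and $w,u\in\mathcal U(\Gamma\vdash\Delta)$. Simulation: $\mathrm R_1\preceq\mathrm R_2$ iff whatever is derivable from given g-sequents using $\mathrm R_1$ is derivable from them using $\mathrm R_2$. An ordered rule set $\triangleright^{i_1}\mathrm R_1\cdots\triangleright^{i_k}\mathrm R_k$ ($i_j\in\{0,1\}$) is $\mathrm R_1\cup\dots\cup\mathrm R_k$ restricted to derivations that (top to bottom) first apply at least $i_1$ rules from $\mathrm R_1$, then at least $i_2$ rules from $\mathrm R_2$, etc.; singletons written by their element. *)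

From Stdlib Require Import List Permutation Relations.
Import ListNotations.

Set Implicit Arguments.

Section GSeq.
Context {U S E : Type}.

(* a letter (a,false) is a ∈ E, (a,true) is ā ∈ Ē *)
Definition letter := (E * bool)%type.
Definition bar_letter (x : letter) : letter := (fst x, negb (snd x)).
Definition bar_str (s : list letter) : list letter := rev (map bar_letter s).

Definition production := (letter * list letter)%type.
Definition bar_prod (p : production) : production := (bar_letter (fst p), bar_str (snd p)).

Definition Esystem (G : production -> Prop) : Prop :=
  (exists l : list production, forall p, G p -> In p l) /\
  (forall p, G p <-> G (bar_prod p)).

Definition rw_step (G : production -> Prop) (s t : list letter) : Prop :=
  exists s1 s2 x t0, s = s1 ++ x :: s2 /\ t = s1 ++ t0 ++ s2 /\ G (x, t0).
Definition lang (G : production -> Prop) (s : list letter) : list letter -> Prop :=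
  fun t => clos_refl_trans (list letter) (rw_step G) s t.

(* Gam a w u  <->  the edge atom w E_a u is in Γ  ((w,u) ∈ E_a);
   Del w T    <->  the prefixed sequent w:T is in Δ  (w ∈ V and L(w) = T). *)
Record gseq := mkG {
  Gam : E -> U -> U -> Prop;
  Del : U -> S -> Prop;
  Del_fun : forall w T1 T2, Del w T1 -> Del w T2 -> T1 = T2;
  Gam_dom : forall a w u, Gam a w u -> (exists T, Del w T) /\ (exists T, Del u T)
}.

Definition inV (G : gseq) (w : U) : Prop := exists T, Del G w T.

Definition edge_step (Gm : E -> U -> U -> Prop) (u : U) (x : letter) (v : U) : Prop :=
  if snd x then Gm (fst x) v u else Gm (fst x) u v.
Fixpoint gpath (Gm : E -> U -> U -> Prop) (u : U) (s : list letter) (w : U) : Prop :=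
  match s with
  | [] => u = w
  | x :: s' => exists v, edge_step Gm u x v /\ gpath Gm v s' w
  end.
Definition path_in (G : gseq) (u : U) (L : list letter -> Prop) (w : U) : Prop :=
  exists s, L s /\ gpath (Gam G) u s w.

Definition rule := list gseq -> gseq -> Prop.

Definition Rsat (R : list S -> (U -> S -> Prop) -> Prop) (l : list S) (D : U -> S -> Prop) : Prop :=
  exists l', Permutation l l' /\ R l' D.

(* the reachability rule r(C,R), with C_i labelled by Gs i (a i), i < n *)
Definition reach_rule (n : nat) (a : nat -> E) (Gs : nat -> production -> Prop)
    (R : list S -> (U -> S -> Prop) -> Prop) : rule :=
  fun prems C =>
    exists (Delta : U -> S -> Prop) (w u : U) (Sw Su : S) (Sp Sp' : nat -> S),
      (* conclusion  Γ ⊢ Δ, w:S, u:S'  (disjoint union) *)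
      ~ Delta w Sw /\ ~ Delta u Su /\ (w, Sw) <> (u, Su) /\
      (forall v T, Del C v T <-> Delta v T \/ (v = w /\ T = Sw) \/ (v = u /\ T = Su)) /\
      length prems = n /\
      (forall i P, nth_error prems i = Some P ->
         (* i-th premise  Γ ⊢ Δ, w:S_i, u:S'_i *)
         (forall b x y, Gam P b x y <-> Gam C b x y) /\
         ~ Delta w (Sp i) /\ ~ Delta u (Sp' i) /\ (w, Sp i) <> (u, Sp' i) /\
         (forall v T, Del P v T <-> Delta v T \/ (v = w /\ T = Sp i) \/ (v = u /\ T = Sp' i)) /\
         path_in P w (lang (Gs i) [(a i, false)]) u) /\
      Rsat R (flat_map (fun i => [Sp i; Sp' i]) (seq 0 n) ++ [Sw; Su]) Delta.

Definition Grule (n : nat) (Gs : nat -> production -> Prop) : production -> Prop :=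
  fun p => exists i, i < n /\ Gs i p.

Definition fracture (n : nat) (a : nat -> E) (Gs : nat -> production -> Prop)
    (R : list S -> (U -> S -> Prop) -> Prop) (G : production -> Prop) : rule :=
  reach_rule n a (fun i p => Gs i p /\ ~ G p) R.

Definition pw : rule :=
  fun prems C => exists P, prems = [P] /\
    exists a w u, inV P w /\ inV P u /\ ~ Gam P a w u /\
      (forall b x y, Gam C b x y <-> Gam P b x y \/ (b = a /\ x = w /\ y = u)) /\
      (forall v T, Del C v T <-> Del P v T).

Definition horn_f (a : E) (s : list letter) : rule :=
  fun prems C => exists P, prems = [P] /\
    exists w u, gpath (Gam C) w s u /\ ~ Gam C a w u /\
      (forall b x y, Gam P b x y <-> Gam C b x y \/ (b = a /\ x = w /\ y = u)) /\
      (forall v T, Del P v T <-> Del C v T).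

Definition horn_b (a : E) (s : list letter) : rule :=
  fun prems C => exists P, prems = [P] /\
    exists w u, gpath (Gam C) w s u /\ ~ Gam C a u w /\
      (forall b x y, Gam P b x y <-> Gam C b x y \/ (b = a /\ x = u /\ y = w)) /\
      (forall v T, Del P v T <-> Del C v T).

Definition horn_of_prod (p : production) : rule :=
  if snd (fst p) then horn_b (fst (fst p)) (snd p) else horn_f (fst (fst p)) (snd p).

Definition horn_set (G : production -> Prop) : rule :=
  fun prems C => exists p, G p /\ horn_of_prod p prems C.

Definition dep_prec (p q : production) : Prop :=
  q <> p /\ q <> bar_prod p /\ (In (fst q) (snd p) \/ In (fst q) (bar_str (snd p))).
Definition dep_le (G : production -> Prop) (p q : production) : Prop :=
  clos_refl_trans production (fun x y => G x /\ G y /\ dep_prec x y) p q.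
(* H' (given by the productions Hp = G(H') of its pairs) is fracturable in DG(H(G)) *)
Definition fracturable (G Hp : production -> Prop) : Prop :=
  forall p q, Hp p -> G q -> ~ Hp q -> ~ dep_le G p q.

Inductive derivn (R : rule) (base : gseq -> Prop) : nat -> gseq -> Prop :=
| derivn_base : forall G, base G -> derivn R base 0 G
| derivn_step : forall prems C ns, R prems C -> Forall2 (derivn R base) ns prems ->
    derivn R base (Datatypes.S (list_sum ns)) C.

Definition stage (blk : nat * rule) (base : gseq -> Prop) : gseq -> Prop :=
  fun G => exists k, fst blk <= k /\ derivn (snd blk) base k G.

(* ▷^{i1} R1 ... ▷^{ik} Rk, read top to bottom *)
Definition ord_deriv (blocks : list (nat * rule)) (base : gseq -> Prop) : gseq -> Prop :=
  fold_left (fun b blk => stage blk b) blocks base.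

Definition simulates (r : rule) (blocks : list (nat * rule)) : Prop :=
  forall prems C, r prems C -> ord_deriv blocks (fun G => In G prems) C.

End GSeq.

(* Let w, u be the two distinguished vertices of an instance of r(C,R), and follow, in each
   premise, a derivation a_i ->* s in G_i together with a w-u path labelled s.  By
   fracturability, once a production of G(H') has been applied, every production applicable to
   the letters it introduces lies in G(H') again; so these letters are inert for the fractured
   system G_i \ G(H'), and the path segment they label can be short-cut by a single edge, which
   a Horn rule of H' justifies.  Adding all short-cut edges to the premises by path weakening
   produces premises of the fractured rule; its conclusion is the original conclusion plus the
   new edges, which the Horn rules of H' then remove again. *)

From Pilot Require Import Defs.
From Stdlib Require Import List Relations.
From Stdlib Require Import Classical Lia.
From Stdlib Require Import FunctionalExtensionality PropExtensionality ProofIrrelevance.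
Import ListNotations.

Section Fracture.
Context {U S E : Type}.
Local Notation gseq := (@Defs.gseq U S E).
Local Notation production := (@Defs.production E).

Lemma gpath_mono {G1 G2 : E -> U -> U -> Prop} :
  (forall b x y, G1 b x y -> G2 b x y) ->
  forall {s u w}, gpath G1 u s w -> gpath G2 u s w.
Proof.
  intros H12 s; induction s as [|x s IH]; simpl; intros u w; [tauto|].
  intros (v & Hx & Hs); exists v; split; [|exact (IH _ _ Hs)].
  unfold edge_step in *; destruct (snd x); auto.
Qed.

Lemma gpath_app {G : E -> U -> U -> Prop} {s1 s2 u} m {w} :
  gpath G u s1 m -> gpath G m s2 w -> gpath G u (s1 ++ s2) w.
Proof.
  revert u; induction s1 as [|x s1 IH]; simpl; intros u H1 H2.
  - subst; exact H2.
  - destruct H1 as (v & Hx & Hs1); exists v; eauto.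
Qed.

Lemma gpath_app_inv {G : E -> U -> U -> Prop} {s1 s2 u w} :
  gpath G u (s1 ++ s2) w -> exists m, gpath G u s1 m /\ gpath G m s2 w.
Proof.
  revert u; induction s1 as [|x s1 IH]; simpl; intros u H.
  - exists u; auto.
  - destruct H as (v & Hx & Hs); destruct (IH _ Hs) as (m & H1 & H2); eauto.
Qed.

Lemma gpath_inV {C : gseq} {s u w} : inV C u -> gpath (Gam C) u s w -> inV C w.
Proof.
  revert u; induction s as [|x s IH]; simpl; intros u Hu.
  - intros <-; exact Hu.
  - intros (v & Hx & Hs); apply (IH v); [|exact Hs].
    unfold edge_step in Hx; destruct (snd x); apply Gam_dom in Hx; tauto.
Qed.

Lemma path_in_mono {C D : gseq} {v Lg w} :
  (forall b x y, Gam C b x y -> Gam D b x y) -> path_in C v Lg w -> path_in D v Lg w.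
Proof. intros HCD (s & Hs & Hp); exists s; split; [exact Hs | exact (gpath_mono HCD Hp)]. Qed.

Lemma rw_step_app_inv {G : production -> Prop} {s1 s2 t} :
  rw_step G (s1 ++ s2) t ->
  (exists t1, rw_step G s1 t1 /\ t = t1 ++ s2) \/ (exists t2, rw_step G s2 t2 /\ t = s1 ++ t2).
Proof.
  intros (l1 & l2 & x & t0 & Hs & -> & HG).
  destruct (app_eq_app _ _ _ _ Hs) as ([|y l] & [[-> Hl] | [-> Hl]]); simpl in Hl; subst.
  - right; exists (t0 ++ l2); rewrite app_nil_r; split; [exists [], l2, x, t0|]; auto.
  - right; exists (t0 ++ l2); rewrite app_nil_r; split; [exists [], l2, x, t0|]; auto.
  - injection Hl as -> ->.
    left; exists (l1 ++ t0 ++ l); split; [exists l1, l, y, t0 | rewrite <- !app_assoc]; auto.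
  - right; exists (y :: l ++ t0 ++ l2); split; [exists (y :: l), l2, x, t0|];
      rewrite <- ?app_assoc; auto.
Qed.

Lemma lang_ctx {G : production -> Prop} l r {s t} :
  lang G s t -> lang G (l ++ s ++ r) (l ++ t ++ r).
Proof.
  induction 1 as [s t (l1 & l2 & x & t0 & -> & -> & HG)| |].
  - apply rt_step; exists (l ++ l1), (l2 ++ r), x, t0.
    split; [|split; [|exact HG]]; rewrite <- !app_assoc; reflexivity.
  - apply rt_refl.
  - eapply rt_trans; eassumption.
Qed.

Lemma lang_app {G : production -> Prop} {s1 s2 t1 t2} :
  lang G s1 t1 -> lang G s2 t2 -> lang G (s1 ++ s2) (t1 ++ t2).
Proof.
  intros H1 H2; apply rt_trans with (t1 ++ s2).
  - exact (lang_ctx [] s2 H1).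
  - pose proof (lang_ctx t1 [] H2) as H; rewrite !app_nil_r in H; exact H.
Qed.

Lemma lang_app_inv {G : production -> Prop} {s1 s2 t} :
  lang G (s1 ++ s2) t -> exists t1 t2, t = t1 ++ t2 /\ lang G s1 t1 /\ lang G s2 t2.
Proof.
  remember (s1 ++ s2) as s eqn:Hs; intro Hst; revert s1 s2 Hs.
  induction Hst as [s t Hst| s | s m t _ IH1 _ IH2]; intros s1 s2 ->.
  - destruct (rw_step_app_inv Hst) as [(t1 & H1 & ->) | (t2 & H2 & ->)].
    + exists t1, s2; repeat split; [apply rt_step; exact H1 | apply rt_refl].
    + exists s1, t2; repeat split; [apply rt_refl | apply rt_step; exact H2].
  - exists s1, s2; repeat split; apply rt_refl.
  - destruct (IH1 s1 s2 eq_refl) as (m1 & m2 & -> & H1 & H2).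
    destruct (IH2 m1 m2 eq_refl) as (t1 & t2 & -> & H1' & H2').
    exists t1, t2; split; [reflexivity | split; eapply rt_trans; eassumption].
Qed.

Lemma lang_inert {G : production -> Prop} {s t} :
  (forall y t0, In y s -> ~ G (y, t0)) -> lang G s t -> t = s.
Proof.
  intros Hinert Hst.
  induction Hst as [s t (l1 & l2 & x & t0 & -> & -> & HG)| s | s m t _ IH1 _ IH2].
  - exfalso; apply (Hinert x t0); [apply in_elt | exact HG].
  - reflexivity.
  - destruct (IH1 Hinert); apply IH2, Hinert.
Qed.

Lemma gseq_ext (C D : gseq) :
  (forall b x y, Gam C b x y <-> Gam D b x y) ->
  (forall v T, Del C v T <-> Del D v T) -> C = D.
Proof.
  destruct C as [g1 d1 f1 h1], D as [g2 d2 f2 h2]; simpl; intros Hg Hd.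
  assert (g1 = g2) as <-.
  { extensionality b; extensionality x; extensionality y.
    apply propositional_extensionality; auto. }
  assert (d1 = d2) as <-.
  { extensionality v; extensionality T; apply propositional_extensionality; auto. }
  f_equal; apply proof_irrelevance.
Qed.

(* An edge with an endpoint outside the vertex set of [C] is silently dropped. *)
Definition add_edge (C : gseq) (b : E) (x y : U) : gseq.
Proof.
  refine (mkG (fun b' x' y' =>
                 Gam C b' x' y' \/ (b' = b /\ x' = x /\ y' = y /\ inV C x /\ inV C y))
              (Del C) (Del_fun C) _).
  intros b' x' y' [H | (_ & -> & -> & Hx & Hy)];
    [exact (Gam_dom C _ _ _ H) | exact (conj Hx Hy)].
Defined.

Fixpoint add_edges (C : gseq) (L : list (E * U * U)) : gseq :=
  match L with
  | [] => C
  | (b, x, y) :: L' => add_edge (add_edges C L') b x y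
  end.

Lemma Del_add_edges (C : gseq) L : Del (add_edges C L) = Del C.
Proof. induction L as [|[[b x] y] L IH]; [reflexivity | exact IH]. Qed.

Lemma inV_add_edges (C : gseq) L v : inV (add_edges C L) v <-> inV C v.
Proof. unfold inV; rewrite Del_add_edges; reflexivity. Qed.

Lemma Gam_add_edges (C : gseq) L :
  forall b x y, Gam C b x y -> Gam (add_edges C L) b x y.
Proof. induction L as [|[[b' x'] y'] L IH]; simpl; auto. Qed.

Lemma add_edges_app (C : gseq) L1 L2 :
  add_edges C (L2 ++ L1) = add_edges (add_edges C L1) L2.
Proof. induction L2 as [|[[b x] y] L2 IH]; simpl; [|rewrite IH]; reflexivity. Qed.

Lemma add_edges_same_frame {P C : gseq} L :
  (forall b x y, Gam P b x y <-> Gam C b x y) -> (forall v, inV P v <-> inV C v) ->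
  forall b x y, Gam (add_edges P L) b x y <-> Gam (add_edges C L) b x y.
Proof.
  intros HGam HV; induction L as [|[[b0 x0] y0] L IH]; simpl; [exact HGam|].
  intros b x y; rewrite IH, !inV_add_edges, !HV; reflexivity.
Qed.

Lemma add_edge_cases (C : gseq) b x y :
  add_edge C b x y = C \/
  (inV C x /\ inV C y /\ ~ Gam C b x y /\
   forall b' x' y',
     Gam (add_edge C b x y) b' x' y' <-> Gam C b' x' y' \/ (b' = b /\ x' = x /\ y' = y)).
Proof.
  destruct (classic (inV C x /\ inV C y /\ ~ Gam C b x y)) as [(Hx & Hy & Hnew) | Hold].
  - right; do 3 (split; [assumption|]); simpl; intros b' x' y'; intuition.
  - left; apply gseq_ext; simpl; [|reflexivity].
    intros b' x' y'; split; [|tauto].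
    intros [H | (-> & -> & -> & Hx & Hy)]; [exact H | apply NNPP; tauto].
Qed.

Definition derivable (Rl : @rule U S E) (base : gseq -> Prop) (C : gseq) : Prop :=
  exists k, derivn Rl base k C.

Lemma derivable_base {Rl base} {C : gseq} : base C -> derivable Rl base C.
Proof. exists 0; constructor; assumption. Qed.

Lemma derivable_unary {Rl base} {P C : gseq} :
  Rl [P] C -> derivable Rl base P -> derivable Rl base C.
Proof.
  intros HR [k Hk]; exists (Datatypes.S (list_sum [k])); apply (derivn_step C HR); auto.
Qed.

Lemma stage0_derivable {Rl base} {C : gseq} : derivable Rl base C -> stage (0, Rl) base C.
Proof. intros [k Hk]; exists k; split; [simpl; lia | exact Hk]. Qed.

Lemma stage1_step {Rl base prems} {C : gseq} :
  Rl prems C -> (forall P, In P prems -> base P) -> stage (1, Rl) base C.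
Proof.
  intros HR Hbase; exists (Datatypes.S (list_sum (map (fun _ => 0) prems))).
  split; [simpl; lia|].
  apply (derivn_step C HR); clear HR.
  induction prems as [|P prems IH]; constructor.
  - constructor; apply Hbase; left; reflexivity.
  - apply IH; intros; apply Hbase; right; assumption.
Qed.

Lemma pw_derivable_add_edges {base} {P : gseq} L :
  base P -> derivable pw base (add_edges P L).
Proof.
  intro HP; induction L as [|[[b x] y] L IH]; simpl; [exact (derivable_base HP)|].
  destruct (add_edge_cases (add_edges P L) b x y) as [-> | (Hx & Hy & Hnew & HGam)];
    [exact IH|].
  refine (derivable_unary _ IH).
  exists (add_edges P L); split; [reflexivity|].
  exists b, x, y; repeat (split; [assumption|]); reflexivity.
Qed.

Definition horn_justified (Hp : production -> Prop) (D : gseq) (b : E) (x y : U) : Prop :=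
  exists t, (Hp ((b, false), t) /\ gpath (Gam D) x t y) \/
            (Hp ((b, true), t) /\ gpath (Gam D) y t x).

Inductive horn_steps (Hp : production -> Prop) (C : gseq) : list (E * U * U) -> Prop :=
| horn_steps_nil : horn_steps Hp C []
| horn_steps_cons b x y L :
    horn_steps Hp C L -> horn_justified Hp (add_edges C L) b x y ->
    horn_steps Hp C ((b, x, y) :: L).

Lemma horn_steps_app {Hp} {C : gseq} {L1 L2} :
  horn_steps Hp C L1 -> horn_steps Hp (add_edges C L1) L2 -> horn_steps Hp C (L2 ++ L1).
Proof.
  intros H1 H2; induction H2 as [|b x y L2 _ IH Hj]; [exact H1|].
  constructor; [exact IH | rewrite add_edges_app; exact Hj].
Qed.

Lemma horn_set_add_edge {Hp base} {D : gseq} {b x y} :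
  horn_justified Hp D b x y -> derivable (horn_set Hp) base (add_edge D b x y) ->
  derivable (horn_set Hp) base D.
Proof.
  intros (t & [[Hh Hpath] | [Hh Hpath]]) Hd;
    destruct (add_edge_cases D b x y) as [Heq | (Hx & Hy & Hnew & HGam)];
    try (rewrite Heq in Hd; exact Hd);
    refine (derivable_unary _ Hd).
  - exists ((b, false), t); split; [exact Hh|].
    exists (add_edge D b x y); split; [reflexivity|].
    exists x, y; repeat (split; [assumption|]); reflexivity.
  - exists ((b, true), t); split; [exact Hh|].
    exists (add_edge D b x y); split; [reflexivity|].
    exists y, x; repeat (split; [assumption|]); reflexivity.
Qed.

Lemma horn_steps_derivable {Hp base} {C : gseq} {L} :
  horn_steps Hp C L -> derivable (horn_set Hp) base (add_edges C L) ->
  derivable (horn_set Hp) base C.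
Proof.
  induction 1 as [|b x y L _ IH Hj]; [tauto|].
  intro Hd; exact (IH (horn_set_add_edge Hj Hd)).
Qed.

Definition dep_closed (G Hp : production -> Prop) : Prop :=
  forall x t0 y t1, Hp (x, t0) -> In y t0 -> G (y, t1) -> Hp (y, t1).

Lemma fracturable_dep_closed {G Hp : production -> Prop} :
  (forall p, Hp p -> G p) -> (forall p, Hp p -> Hp (bar_prod p)) ->
  fracturable G Hp -> dep_closed G Hp.
Proof.
  intros Hsub Hpair Hfrac x t0 y t1 Hx Hy Hyt; apply NNPP; intro Hn.
  apply (Hfrac (x, t0) (y, t1) Hx Hyt Hn), rt_step.
  split; [exact (Hsub _ Hx)|]; split; [exact Hyt|].
  split; [intros Heq; rewrite Heq in Hn; exact (Hn Hx)|].
  split; [intros Heq; rewrite Heq in Hn; exact (Hn (Hpair _ Hx))|].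
  left; exact Hy.
Qed.

Lemma horn_justified_letter {Hp} {D : gseq} {x t0 m1 m2} :
  Hp (x, t0) -> gpath (Gam D) m1 t0 m2 -> inV D m1 -> inV D m2 ->
  exists b y z, horn_justified Hp D b y z /\ edge_step (Gam (add_edge D b y z)) m1 x m2.
Proof.
  destruct x as [b []]; intros Hh Hpath Hm1 Hm2; [exists b, m2, m1 | exists b, m1, m2];
    (split; [exists t0; auto | simpl; right; auto]).
Qed.

Lemma horn_steps_fracture {G Hp : production -> Prop} {C : gseq} {v1 v2 s} :
  dep_closed G Hp -> inV C v1 -> path_in C v1 (lang G s) v2 ->
  exists L, horn_steps Hp C L /\
    path_in (add_edges C L) v1 (lang (fun p => G p /\ ~ Hp p) s) v2.
Proof.
  intros Hclosed Hv1 (t & Hst & Hpath); apply clos_rt_rt1n in Hst.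
  induction Hst as [s | s s1 t (l1 & l2 & x & t0 & -> & -> & HG) _ IH].
  - exists []; split; [constructor | exists s; split; [apply rt_refl | exact Hpath]].
  - destruct (IH Hpath) as (L & HL & t' & Ht' & Hpath').
    destruct (classic (Hp (x, t0))) as [Hh | Hh].
    + destruct (lang_app_inv Ht') as (t1 & t02 & -> & Ht1 & Ht02).
      destruct (lang_app_inv Ht02) as (t0' & t2 & -> & Ht0 & Ht2).
      assert (Hinert : t0' = t0).
      { apply (lang_inert (G := fun p => G p /\ ~ Hp p)); [|exact Ht0].
        intros y ty Hy [Hyt Hn]; exact (Hn (Hclosed _ _ _ _ Hh Hy Hyt)). }
      rewrite Hinert in Hpath'.
      destruct (gpath_app_inv Hpath') as (m1 & Hp1 & Hpath'').
      destruct (gpath_app_inv Hpath'') as (m2 & Hp0 & Hp2).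
      assert (Hm1 : inV (add_edges C L) m1)
        by exact (gpath_inV (proj2 (inV_add_edges C L v1) Hv1) Hp1).
      assert (Hm2 : inV (add_edges C L) m2) by exact (gpath_inV Hm1 Hp0).
      destruct (horn_justified_letter Hh Hp0 Hm1 Hm2) as (b & y & z & Hj & Hx).
      exists ((b, y, z) :: L); split; [constructor; assumption|].
      exists (t1 ++ [x] ++ t2); split.
      * exact (lang_app Ht1 (lang_app (rt_refl _ _ [x]) Ht2)).
      * assert (Hmono : forall b' x' y', Gam (add_edges C L) b' x' y' ->
                                          Gam (add_edge (add_edges C L) b y z) b' x' y')
          by (simpl; tauto).
        apply gpath_app with m1; [exact (gpath_mono Hmono Hp1)|].
        apply gpath_app with m2; [exists m2; split; [exact Hx | reflexivity]|].
        exact (gpath_mono Hmono Hp2).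
    + exists L; split; [exact HL|]; exists t'; split; [|exact Hpath'].
      apply rt_trans with (l1 ++ t0 ++ l2); [|exact Ht'].
      apply rt_step; exists l1, l2, x, t0; auto.
Qed.

Lemma horn_steps_fracture_all {Hp : production -> Prop} {C : gseq} {v1 v2 n}
    {Gs : nat -> production -> Prop} {s : nat -> list letter} :
  (forall i, i < n -> dep_closed (Gs i) Hp) -> inV C v1 ->
  (forall i, i < n -> path_in C v1 (lang (Gs i) (s i)) v2) ->
  exists L, horn_steps Hp C L /\
    forall i, i < n -> path_in (add_edges C L) v1 (lang (fun p => Gs i p /\ ~ Hp p) (s i)) v2.
Proof.
  intros Hclosed Hv1 Hpaths; induction n as [|n IH].
  - exists []; split; [constructor | intros i Hi; inversion Hi].
  - destruct IH as (L1 & HL1 & Hpaths1); [intros i Hi; auto..|].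
    assert (Hv1' : inV (add_edges C L1) v1) by exact (proj2 (inV_add_edges C L1 v1) Hv1).
    assert (Hn : path_in (add_edges C L1) v1 (lang (Gs n) (s n)) v2)
      by exact (path_in_mono (Gam_add_edges C L1) (Hpaths n (le_n _))).
    destruct (horn_steps_fracture (Hclosed n (le_n _)) Hv1' Hn) as (L2 & HL2 & Hpath2).
    exists (L2 ++ L1); split; [exact (horn_steps_app HL1 HL2)|].
    rewrite add_edges_app; intros i Hi; inversion Hi as [|n' Hin]; [exact Hpath2|].
    exact (path_in_mono (Gam_add_edges _ L2) (Hpaths1 i Hin)).
Qed.

Lemma inV_relabel {P C : gseq} {D : U -> S -> Prop} {w u Sw Su Sw' Su'} :
  (forall v T, Del P v T <-> D v T \/ (v = w /\ T = Sw) \/ (v = u /\ T = Su)) ->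
  (forall v T, Del C v T <-> D v T \/ (v = w /\ T = Sw') \/ (v = u /\ T = Su')) ->
  forall v, inV P v <-> inV C v.
Proof.
  intros HP HC v; unfold inV; split; intros [T HT].
  - apply HP in HT as [HT | [[-> ->] | [-> ->]]]; eexists; apply HC; eauto.
  - apply HC in HT as [HT | [[-> ->] | [-> ->]]]; eexists; apply HP; eauto.
Qed.

Lemma reach_rule_add_edges {n a Gs R prems} {C : gseq} :
  reach_rule n a Gs R prems C ->
  exists w u, inV C w /\ (forall i, i < n -> path_in C w (lang (Gs i) [(a i, false)]) u) /\
    forall Gs' L, (forall i, i < n -> path_in (add_edges C L) w (lang (Gs' i) [(a i, false)]) u) ->
      reach_rule n a Gs' R (map (fun P => add_edges P L) prems) (add_edges C L).
Proof.
  intros (Delta & w & u & Sw & Su & Sp & Sp' & Hw & Hu & Hwu & HDel & Hlen & Hprem & HR).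
  exists w, u; split; [exists Sw; apply HDel; auto|split].
  - intros i Hi; destruct (nth_error prems i) as [P|] eqn:HP;
      [|apply nth_error_None in HP; lia].
    destruct (Hprem i P HP) as (HGam & _ & _ & _ & _ & Hpath).
    exact (path_in_mono (fun b x y => proj1 (HGam b x y)) Hpath).
  - intros Gs' L Hpaths; exists Delta, w, u, Sw, Su, Sp, Sp'.
    rewrite Del_add_edges, length_map.
    do 5 (split; [assumption|]); split; [|exact HR].
    intros i P' HP'; rewrite nth_error_map in HP'.
    destruct (nth_error prems i) as [P|] eqn:HP; simpl in HP';
      [injection HP' as <- | discriminate].
    assert (Hi : i < n) by (rewrite <- Hlen; apply nth_error_Some; congruence).
    destruct (Hprem i P HP) as (HGam & HwP & HuP & HwuP & HDelP & _).
    pose proof (add_edges_same_frame L HGam (inV_relabel HDelP HDel)) as Hframe.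
    split; [exact Hframe|]; rewrite Del_add_edges; do 4 (split; [assumption|]).
    exact (path_in_mono (fun b x y => proj2 (Hframe b x y)) (Hpaths i Hi)).
Qed.

End Fracture.

Theorem mainTheorem9
  (U S E : Type)
  (* S is countably infinite *)
  (HS : exists f : nat -> S, (forall x y, f x = f y -> x = y) /\ (forall s, exists k, f k = s))
  (* E is finite and non-empty *)
  (HEfin : exists l : list E, forall a, In a l) (HEne : inhabited E)
  (* the reachability rule r(C,R) *)
  (n : nat) (a : nat -> E) (Gs : nat -> @production E -> Prop)
  (HGs : forall i, i < n -> Esystem (Gs i))
  (R : list S -> (U -> S -> Prop) -> Prop)
  (* H' ⊆ H(G(r(C,R))), given by Hp = G(H'), a union of production pairs of G(r(C,R)) *)
  (Hp : @production E -> Prop)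
  (Hsub : forall p, Hp p -> Grule n Gs p)
  (Hpair : forall p, Hp p -> Hp (bar_prod p))
  (Hfrac : fracturable (Grule n Gs) Hp) :
  simulates (@reach_rule U S E n a Gs R)
    [(0, @pw U S E); (1, @fracture U S E n a Gs R Hp); (0, @horn_set U S E Hp)].
Proof.
  intros prems C Hr.
  destruct (reach_rule_add_edges Hr) as (w & u & Hw & Hpaths & Hreframe).
  assert (Hclosed : forall i, i < n -> dep_closed (Gs i) Hp).
  { intros i Hi x t0 y t1 Hx Hy Hyt.
    exact (fracturable_dep_closed Hsub Hpair Hfrac _ _ _ _ Hx Hy (ex_intro _ i (conj Hi Hyt))).
  }
  destruct (horn_steps_fracture_all Hclosed Hw Hpaths) as (L & HL & Hpaths').
  apply stage0_derivable, (horn_steps_derivable HL), derivable_base.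
  apply (stage1_step (Hreframe _ L Hpaths')).
  intros P' HP'; apply in_map_iff in HP' as (P & <- & HP).
  exact (stage0_derivable (pw_derivable_add_edges L HP)).
Qed.
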